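(* Let $k$ be a field of characteristic different from $2$ containing a square root of $-1$, and let $q$ be a quadratic form of dimension $n$ over $k$. (i) If $q\in I(k)$, then $\mathrm{Pf}_1(q)\leq n$; if moreover $q$ represents $1$, then $\mathrm{Pf}_1(q)\leq n-1$. (ii) If $q\in I^2(k)$, then $\mathrm{Pf}_2(q)\leq n-2$; if moreover $q$ represents $1$, then $\mathrm{Pf}_2(q)\leq n-3$.
   Context: $W(k)$ is the Witt ring, $I(k)$ its fundamental ideal (classes of even-dimensional forms), $I^m(k)$ its $m$-th power; a form is in $I^m(k)$ if its Witt class is. An $m$-fold Pfister form is $\langle\langle a_1,\ldots,a_m\rangle\rangle=\langle 1,a_1\rangle\otimes\cdots\otimes\langle 1,a_m\rangle$, $a_i\in k^\times$. For $q\in I^m(k)$, $\mathrm{Pf}_m(q)$ is the least number of terms in an expression of the Witt class of $q$ as a sum of $m$-fold Pfister forms in $W(k)$. *)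

(* Quadratic forms over a field k (char <> 2) are given by
   their symmetric Gram matrix: q(x) = x *m A *m x^T. *)
From HB Require Import structures.
From mathcomp Require Import all_boot all_order all_algebra.
From mathcomp Require mxtens.
Set Implicit Arguments. Unset Strict Implicit. Unset Printing Implicit Defensive.
Import GRing.Theory.
Local Open Scope ring_scope.

Record qform (k : fieldType) := QForm { qdim : nat; gram : 'M[k]_qdim }.
Arguments QForm {k qdim}.

Section QF.
Variable k : fieldType.
Implicit Types (p q : qform k).

Definition qsymmetric p : Prop := (gram p)^T = gram p.
Definition qnondeg p : Prop := gram p \in unitmx.
Definition is_qf p : Prop := qsymmetric p /\ qnondeg p.

Definition qval p (x : 'rV[k]_(qdim p)) : k := (x *m gram p *m x^T) 0 0.
Definition represents p (c : k) : Prop :=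
  exists x : 'rV[k]_(qdim p), qval x = c.

Definition isometric p q : Prop :=
  qdim p = qdim q /\
  exists P : 'M[k]_(qdim q, qdim p),
    \rank P = qdim q /\ P *m gram p *m P^T = gram q.

Definition qsum p q : qform k := QForm (block_mx (gram p) 0 0 (gram q)).
Definition qtens p q : qform k := QForm (mxtens.tensmx (gram p) (gram q)).
Definition qdiag (s : seq k) : qform k :=
  QForm (diag_mx (\row_(i < size s) s`_i)).
Definition qzero : qform k := qdiag [::].
Definition qone : qform k := qdiag [:: 1].
Definition qbigsum (l : seq (qform k)) : qform k := foldr qsum qzero l.
Definition qbigtens (l : seq (qform k)) : qform k := foldr qtens qone l.

Definition hyp (r : nat) : qform k := qdiag (flatten (nseq r [:: 1; -1])).

Definition witt_equiv p q : Prop :=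
  exists r s : nat, isometric (qsum p (hyp r)) (qsum q (hyp s)).

(* q \in I^m(k): the Witt class of q is a sum of products of m elements of
   I(k) (classes of even-dimensional forms); this is the additive description
   of the m-th power of the ideal I(k). *)
Definition in_Ipow (m : nat) q : Prop :=
  exists (r : nat) (F : 'I_r -> 'I_m -> qform k),
    (forall i j, is_qf (F i j) /\ ~~ odd (qdim (F i j))) /\
    witt_equiv q
      (qbigsum [seq qbigtens [seq F i j | j <- enum 'I_m] | i <- enum 'I_r]).

Definition pfister (a : seq k) : qform k :=
  qbigtens [seq qdiag [:: 1; x] | x <- a].

(* Pf_m(q) <= r : the Witt class of q is a sum of at most r m-fold Pfister
   forms (with entries in k^x). *)
Definition Pf_le (m : nat) q (r : nat) : Prop :=
  exists s : seq (seq k),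
    (size s <= r)%N /\
    all (fun a => (size a == m) && all (fun x => x != 0) a) s /\
    witt_equiv q (qbigsum (map pfister s)).

End QF.

From HB Require Import structures.
From mathcomp Require Import all_boot all_order all_algebra.
From mathcomp Require Import perm mxtens ring zify.
Set Implicit Arguments. Unset Strict Implicit. Unset Printing Implicit Defensive.
Import GRing.Theory.
Local Open Scope ring_scope.

(* Since char k <> 2 and -1 is a square, every form is diagonal, with any
   represented value as first coefficient, and every binary form <x, x> is
   hyperbolic; so <1> has order 2 in W(k).  Writing q = <a_1, ..., a_n> with
   n even (q is in I), q = <<a_1>> + ... + <<a_n>> - n<1> = sum of the <<a_i>>,
   and when a_1 = 1 the term <<a_1>> = 2<1> can be dropped.  If q is in I^2,
   its determinant is moreover a square.  The Witt relation
   <b, x> = <<b, x>> + <1, bx> applied along the chain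
   b = a_1, a_1 a_2, ..., a_1 ... a_(n-2) with x = a_2, ..., a_(n-1) turns q
   into n - 2 two-fold Pfister forms plus (n - 2)<1> + <a_1 ... a_(n-1), a_n>,
   and the last form is hyperbolic because a_1 ... a_n is a square. *)

Ltac perm_by_count := apply/seq.permP => ?; do 6! rewrite ?count_cat ?count_nseq /=; lia.

Lemma nth_allpairs (T : Type) (x0 : T) (f : T -> T -> T) (s t : seq T) i j :
  (i < size s)%N -> (j < size t)%N ->
  nth x0 [seq f x y | x <- s, y <- t] (i * size t + j) = f (nth x0 s i) (nth x0 t j).
Proof.
elim: s i => [|x s IH] [|i] //= Hi Hj.
  by rewrite mul0n add0n nth_cat size_map Hj (nth_map x0).
by rewrite nth_cat size_map mulSn -addnA ltnNge leq_addr /= addKn IH.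
Qed.

Section Isometry.
Variable k : fieldType.
Implicit Types p q r : qform k.

Lemma isometric_unitmx n (A B P : 'M[k]_n) :
  P \in unitmx -> P *m A *m P^T = B -> isometric (QForm A) (QForm B).
Proof. by move=> uP eB; split=> //; exists P; rewrite mxrank_unit. Qed.

Lemma isometric_unitmx_image n (A B P : 'M[k]_n) :
  B \in unitmx -> P *m A *m P^T = B -> isometric (QForm A) (QForm B).
Proof.
move=> uB eB; apply: (isometric_unitmx (P := P)) => //.
by move: uB; rewrite -eB !unitmxE !det_mulmx !unitrM => /andP[/andP[]].
Qed.

Lemma isometric_unitmxP n (A B : 'M[k]_n) :
  isometric (QForm A) (QForm B) -> exists2 P, P \in unitmx & P *m A *m P^T = B.
Proof. by case=> _ [P [rP eB]]; exists P => //; rewrite -row_free_unit /row_free rP. Qed.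

Lemma qdim_isometric p q : isometric p q -> qdim p = qdim q.
Proof. by case. Qed.

Lemma isometric_refl p : isometric p p.
Proof.
case: p => n A; apply: (isometric_unitmx (P := 1%:M)); first exact: unitmx1.
by rewrite trmx1 mulmx1 mul1mx.
Qed.

Lemma isometric_sym p q : isometric p q -> isometric q p.
Proof.
case: p => m A; case: q => n B iAB; have /= e := qdim_isometric iAB; subst n.
have [P uP eB] := isometric_unitmxP iAB.
apply: (isometric_unitmx (P := invmx P)); first by rewrite unitmx_inv.
by rewrite -eB !mulmxA mulVmx // mul1mx -mulmxA -trmx_mul mulVmx // trmx1 mulmx1.
Qed.

Lemma isometric_trans p q r : isometric p q -> isometric q r -> isometric p r.
Proof.
case: p => l A; case: q => m B; case: r => n C iAB iBC.
have /= e1 := qdim_isometric iAB; have /= e2 := qdim_isometric iBC; subst m n.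
have [P uP eB] := isometric_unitmxP iAB; have [Q uQ eC] := isometric_unitmxP iBC.
apply: (isometric_unitmx (P := Q *m P)); first by rewrite unitmx_mul uP uQ.
by rewrite -eC -eB trmx_mul !mulmxA.
Qed.

Lemma isometric_cast m n (A : 'M[k]_m) (B : 'M[k]_n) (e : m = n) :
  (forall i j, A i j = B (cast_ord e i) (cast_ord e j)) ->
  isometric (QForm A) (QForm B).
Proof.
subst n => eAB; apply: (isometric_unitmx (P := 1%:M)); first exact: unitmx1.
by rewrite trmx1 mulmx1 mul1mx; apply/matrixP=> i j; rewrite eAB !cast_ord_id.
Qed.

Lemma isometric_qsum p p' q q' : isometric p p' -> isometric q q' ->
  isometric (qsum p q) (qsum p' q').
Proof.
case: p p' => m A [m' A'] iA; have /= e := qdim_isometric iA; subst m'.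
case: q q' => n B [n' B'] iB; have /= e := qdim_isometric iB; subst n'.
have [P uP eA] := isometric_unitmxP iA; have [Q uQ eB] := isometric_unitmxP iB.
apply: (isometric_unitmx (P := block_mx P 0 0 Q)).
  by rewrite unitmxE det_ublock unitrM -!unitmxE uP uQ.
rewrite tr_block_mx !mulmx_block !trmx0 !mulmx0 !mul0mx !addr0 !add0r.
by rewrite eA eB !mul0mx.
Qed.

Lemma isometric_qtens p p' q q' : isometric p p' -> isometric q q' ->
  isometric (qtens p q) (qtens p' q').
Proof.
case: p p' => m A [m' A'] iA; have /= e := qdim_isometric iA; subst m'.
case: q q' => n B [n' B'] iB; have /= e := qdim_isometric iB; subst n'.
rewrite /qtens /=.
case: m A A' iA => [|m] A A' iA; first by apply: isometric_cast => /= -[].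
case: n B B' iB => [|n] B B' iB.
  by apply: isometric_cast => // i; exfalso; case: i => /= i; rewrite muln0.
have [P uP eA] := isometric_unitmxP iA; have [Q uQ eB] := isometric_unitmxP iB.
apply: (isometric_unitmx (P := tensmx P Q)); first exact: tensmx_unit.
by rewrite trmx_tens !tensmx_mul eA eB.
Qed.

Lemma det_isometric p q : isometric p q ->
  exists2 c : k, c != 0 & \det (gram q) = c ^+ 2 * \det (gram p).
Proof.
case: p q => m A [n B] iAB; have /= e := qdim_isometric iAB; subst n.
have [P uP eB] := isometric_unitmxP iAB.
exists (\det P); first by rewrite -unitfE -unitmxE.
by rewrite -eB !det_mulmx det_tr mulrAC expr2.
Qed.

End Isometry.

Section DiagonalForms.
Variable k : fieldType.
Implicit Types s t : seq k.

Lemma qsum_qdiag s t : isometric (qsum (qdiag s) (qdiag t)) (qdiag (s ++ t)).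
Proof.
rewrite /qsum /qdiag /=.
apply: (@isometric_cast _ _ _ _ _ (esym (size_cat s t))) => i j.
rewrite [RHS]mxE [in RHS]mxE -val_eqE /=.
case: (split_ordP i) => i' ->; case: (split_ordP j) => j' ->;
rewrite ?block_mxEul ?block_mxEur ?block_mxEdl ?block_mxEdr ?mxE /= ?nth_cat /=.
- by rewrite ltn_ord.
- by rewrite (@ltn_eqF i') ?mulr0n // ltn_addr.
- by rewrite eq_sym (@ltn_eqF j') ?mulr0n // ltn_addr.
- by rewrite ltnNge leq_addr /= addKn eqn_add2l.
Qed.

Lemma qdiag_perm s t : perm_eq s t -> isometric (qdiag s) (qdiag t).
Proof.
rewrite perm_sym => /(@tuple_permP _ _ t (in_tuple s)) [p et].
have e : size s = size t by rewrite et size_tuple.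
have et' (i : 'I_(size s)) : t`_i = s`_(p i).
  by rewrite et -tnth_nth tnth_mktuple (tnth_nth 0).
pose d := \row_(i < size s) s`_i.
apply: (@isometric_trans _ _ (QForm (diag_mx (\row_i d 0 (p i))))).
  apply: (isometric_unitmx (P := perm_mx p)); first exact: unitmx_perm.
  rewrite tr_perm_mx -row_permE -col_permE; apply/matrixP=> i j.
  by rewrite !mxE (inj_eq perm_inj).
apply: (@isometric_cast _ _ _ _ _ e) => i j.
by rewrite !mxE /= et' -val_eqE /= (inj_eq val_inj).
Qed.

Lemma qtens_qdiag s t :
  isometric (qtens (qdiag s) (qdiag t)) (qdiag [seq x * y | x <- s, y <- t]).
Proof.
rewrite /qtens /qdiag /=.
have e : (size s * size t)%N = size [seq x * y | x <- s, y <- t].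
  by rewrite size_allpairs.
apply: (@isometric_cast _ _ _ _ _ e) => I J.
case: (mxtens_indexP I) => i1 i2; case: (mxtens_indexP J) => j1 j2.
rewrite tensmxE !mxE /= nth_allpairs // (inj_eq (@cast_ord_inj _ _ e)).
rewrite (inj_eq (can_inj (@mxtens_indexK _ _))) xpair_eqE.
by case: (i1 == j1); case: (i2 == j2); rewrite /= ?mulr0n ?mulr0 ?mul0r ?mulr1n.
Qed.

Lemma det_qdiag s : \det (gram (qdiag s)) = \prod_(x <- s) x.
Proof.
rewrite /= det_diag (big_nth 0) big_mkord.
by apply: eq_bigr => i _; rewrite mxE.
Qed.

Lemma qdiag_scale_sq (x c : k) : c != 0 ->
  isometric (qdiag [:: x]) (qdiag [:: c ^+ 2 * x]).
Proof.
move=> c0; apply: (isometric_unitmx (P := c%:M)).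
  by rewrite unitmxE det_scalar unitfE expf_neq0.
rewrite tr_scalar_mx; apply/matrixP => a b.
by rewrite !mxE !big_ord1 !mxE !big_ord1 !mxE !ord1 /= !mulr1n; ring.
Qed.

(* The rows (al, ii be) and (be, ii al), where al + be = 1 and al - be = 1/x,
   are orthogonal for <x, x>, with values x (al^2 - be^2) = 1 and -1. *)
Lemma qdiag_pair_hyp (ii : k) : ii ^+ 2 = -1 -> (2%:R : k) != 0 ->
  forall x : k, x != 0 -> isometric (qdiag [:: x; x]) (qdiag [:: 1; -1]).
Proof.
move=> ii2 two_neq0 x x0.
pose al := (1 + x^-1) / 2%:R; pose be := (1 - x^-1) / 2%:R.
pose P : 'M[k]_2 := \matrix_(a < 2, b < 2)
  if (a : nat) == 0%N then (if (b : nat) == 0%N then al else ii * be)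
  else (if (b : nat) == 0%N then be else ii * al).
have hiM u v : (ii * u) * (ii * v) = - (u * v).
  by rewrite mulrACA -expr2 ii2 mulN1r.
apply: (isometric_unitmx_image (P := P)).
  rewrite unitmxE; have /= -> := det_qdiag [:: (1 : k); -1].
  by rewrite unitfE !big_cons big_nil mulr1 mul1r oppr_eq0 oner_eq0.
have -> : diag_mx (\row_(i < 2) [:: x; x]`_i) = x%:M.
  by apply/matrixP => a b; rewrite !mxE; case: a => [[|[|a]]] //= _.
rewrite mul_mx_scalar -scalemxAl.
apply/matrixP => a b; rewrite !mxE !big_ord_recl big_ord0 !mxE /=.
case: a => [[|[|a]]] //= Ha; case: b => [[|[|b]]] //= Hb;
  rewrite ?hiM /al /be /=; field; by rewrite two_neq0 x0.
Qed.

End DiagonalForms.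

Section Diagonalization.
Variable k : fieldType.

Local Notation qvalmx A x := (qval (p := QForm A) x).

(* Change basis to (x, e_2, ..., e_n), then clear the first row and column. *)
Lemma qform_split_head n (A : 'M[k]_(1 + n)) (x : 'rV_(1 + n)) :
  A^T = A -> A \in unitmx -> x 0 0 != 0 -> qvalmx A x != 0 ->
  exists D : 'M[k]_n, [/\ D^T = D, D \in unitmx &
    isometric (QForm A) (qsum (qdiag [:: qvalmx A x]) (QForm D))].
Proof.
move=> sA uA x0 c0; set c := qvalmx A x.
pose P : 'M[k]_(1 + n) := block_mx (lsubmx x) (rsubmx x) 0 1%:M.
have uP : P \in unitmx.
  rewrite unitmxE det_ublock det1 mulr1 det_mx11 unitfE mxE.
  by have -> : lshift n (0 : 'I_1) = 0 by apply: val_inj.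
pose B := P *m A *m P^T.
have sB : B^T = B by rewrite /B !trmx_mul trmxK sA mulmxA.
have eC : ulsubmx B = c%:M.
  rewrite [LHS]mx11_scalar; congr (_%:M).
  have uPx : usubmx P = x by rewrite /P block_mxEv col_mxKu hsubmxK.
  by rewrite /B /ulsubmx -mul_usub_mx -mul_usub_mx uPx -mulmx_lsub -trmx_usub uPx.
set w := ursubmx B; set D := drsubmx B.
have eDL : dlsubmx B = w^T by rewrite /w trmx_ursub sB.
pose Q : 'M[k]_(1 + n) := block_mx 1%:M 0 (- c^-1 *: w^T) 1%:M.
pose D' := D - c^-1 *: (w^T *m w).
have eB' : Q *m B *m Q^T = block_mx c%:M 0 0 D'.
  rewrite -[B in LHS]submxK eC eDL -/w -/D tr_block_mx !mulmx_block.
  rewrite ?mul1mx ?mul0mx ?mulmx0 ?mulmx1 ?addr0 ?add0r ?trmx0 ?trmx1.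
  rewrite ?mul1mx ?mul0mx ?mulmx0 ?mulmx1 ?addr0 ?add0r.
  have -> : - c^-1 *: w^T *m c%:M + w^T = 0.
    by rewrite mul_mx_scalar scalerA mulrN divff // scaleN1r addNr.
  have -> : c%:M *m (- c^-1 *: w^T)^T + w = 0.
    by rewrite linearZ /= trmxK mul_scalar_mx scalerA mulrN divff // scaleN1r addNr.
  by rewrite mul0mx add0r /D' -scalemxAl scaleNr addrC.
have uQ : Q \in unitmx by rewrite unitmxE det_lblock !det1 mulr1 unitr1.
exists D'; split.
- by rewrite /D' linearB /= linearZ /= trmx_mul trmxK /D trmx_drsub sB.
- have : Q *m B *m Q^T \in unitmx by rewrite !unitmx_mul !unitmx_tr uQ uP uA.
  by rewrite eB' !unitmxE det_ublock unitrM => /andP [].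
apply: isometric_trans (isometric_unitmx uP (erefl B)) _.
apply: isometric_trans (isometric_unitmx uQ eB') _.
change (isometric (qsum (QForm (c%:M : 'M[k]_1)) (QForm D'))
                  (qsum (qdiag [:: c]) (QForm D'))).
apply: (isometric_qsum _ (isometric_refl _)).
by apply: (@isometric_cast _ _ _ _ _ (erefl 1%N)) => i j; rewrite !ord1 !mxE.
Qed.

Lemma qform_split n (A : 'M[k]_n.+1) (x : 'rV_n.+1) :
  A^T = A -> A \in unitmx -> qvalmx A x != 0 ->
  exists D : 'M[k]_n, [/\ D^T = D, D \in unitmx &
    isometric (QForm A) (qsum (qdiag [:: qvalmx A x]) (QForm D))].
Proof.
move=> sA uA cx.
have [j xj] : exists j, x 0 j != 0.
  case: (pickP (fun j => x 0 j != 0)) => [j xj|hx]; first by exists j.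
  suff x0 : x = 0 by move: cx; rewrite x0 /qval !mul0mx mxE eqxx.
  by apply/matrixP => a b; rewrite !ord1 mxE; move/negbFE/eqP: (hx b).
pose S : 'M[k]_n.+1 := perm_mx (tperm 0 j).
have uS : S \in unitmx by exact: unitmx_perm.
have STS : S^T *m S = 1%:M by rewrite tr_perm_mx -perm_mxM mulVg perm_mx1.
pose A' := S *m A *m S^T; pose x' := x *m S^T.
have ev : qvalmx A' x' = qvalmx A x.
  rewrite /qval /A' /x' /= trmx_mul trmxK !mulmxA -[x *m S^T *m S]mulmxA STS mulmx1.
  by rewrite -[x *m A *m S^T *m S]mulmxA STS mulmx1.
have sA' : A'^T = A' by rewrite /A' !trmx_mul trmxK sA mulmxA.
have uA' : A' \in unitmx by rewrite !unitmx_mul unitmx_tr uS uA.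
have x'0 : x' 0 0 != 0 by rewrite /x' /S tr_perm_mx -col_permE mxE tpermL.
have cx' : qvalmx A' x' != 0 by rewrite ev.
have [D [sD uD iA']] := qform_split_head sA' uA' x'0 cx'.
exists D; split => //; rewrite -ev.
exact: isometric_trans (isometric_unitmx uS (erefl A')) iA'.
Qed.

Lemma qval_delta n (A : 'M[k]_n) i j :
  ((delta_mx 0 i : 'rV_n) *m A *m (delta_mx 0 j : 'rV_n)^T) 0 0 = A i j.
Proof. by rewrite -rowE trmx_delta -colE !mxE. Qed.

Hypothesis two_neq0 : (2%:R : k) != 0.

(* If every diagonal entry vanishes, some e_i + e_j has value 2 A_ij. *)
Lemma anisotropic_vector n (A : 'M[k]_n.+1) : A^T = A -> A \in unitmx ->
  exists x, qvalmx A x != 0.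
Proof.
move=> sA uA.
case: (pickP (fun i => A i i != 0)) => [i Ai|hd].
  by exists (delta_mx 0 i); rewrite /qval qval_delta.
case: (pickP (fun ij : 'I_n.+1 * 'I_n.+1 => A ij.1 ij.2 != 0)) => [[i j] /= Aij|hA].
  have addE (M N : 'M[k]_1) : (M + N) 0 0 = M 0 0 + N 0 0 by rewrite mxE.
  exists (delta_mx 0 i + delta_mx 0 j); rewrite /qval /=.
  rewrite linearD /= !mulmxDl !mulmxDr !addE !qval_delta.
  have -> : A j i = A i j by rewrite -[in LHS]sA mxE.
  move/negbFE/eqP: (hd i) => ->; move/negbFE/eqP: (hd j) => ->.
  by rewrite add0r addr0 -mulr2n -mulr_natl mulf_neq0.
suff A0 : A = 0 by move: uA; rewrite A0 unitmxE det0 unitr0.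
by apply/matrixP => a b; rewrite mxE; move/negbFE/eqP: (hA (a, b)).
Qed.

Lemma symmetric_unitmx_diag n (A : 'M[k]_n) : A^T = A -> A \in unitmx ->
  exists2 s, all (fun y => y != 0) s & isometric (QForm A) (qdiag s).
Proof.
elim: n A => [|n IH] A sA uA.
  by exists [::] => //; apply: (@isometric_cast _ _ _ _ _ (erefl 0%N)) => -[].
have [x cx] := anisotropic_vector sA uA.
have [D [sD uD iA]] := qform_split sA uA cx.
have [s s_nz iD] := IH D sD uD.
exists (qvalmx A x :: s); first by rewrite /= cx.
apply: isometric_trans iA _; apply: isometric_trans (qsum_qdiag [:: _] s).
exact: isometric_qsum (isometric_refl _) iD.
Qed.

Lemma qf_diag (p : qform k) : is_qf p ->
  exists2 a, all (fun y => y != 0) a & isometric p (qdiag a).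
Proof. by case: p => n A [sA uA]; exact: symmetric_unitmx_diag. Qed.

Lemma qf_diag_represents (p : qform k) (c : k) : is_qf p -> represents p c ->
  c != 0 -> exists2 a, all (fun y => y != 0) a & isometric p (qdiag (c :: a)).
Proof.
case: p => [[|n] A] [sA uA] [x <-] cx.
  by move: cx; rewrite /qval /= mxE big_ord0 eqxx.
have [D [sD uD iA]] := qform_split sA uA cx.
have [s s_nz iD] := symmetric_unitmx_diag sD uD.
exists s => //; apply: isometric_trans iA _.
apply: isometric_trans (qsum_qdiag [:: _] s).
exact: isometric_qsum (isometric_refl _) iD.
Qed.

End Diagonalization.

Section WittDiag.
Variable k : fieldType.
Implicit Types (a b c : seq k) (x y : k).

Definition hyp_seq r : seq k := flatten (nseq r [:: 1; -1]).

Lemma hyp_seqD r u : hyp_seq (r + u) = hyp_seq r ++ hyp_seq u.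
Proof. by rewrite /hyp_seq nseqD flatten_cat. Qed.

(* This is [witt_equiv] on diagonal forms, as [hyp k r] is [qdiag (hyp_seq r)]. *)
Definition witt_diag a b :=
  exists r u, isometric (qdiag (a ++ hyp_seq r)) (qdiag (b ++ hyp_seq u)).

Lemma isometric_qdiag_cat a a' b b' :
  isometric (qdiag a) (qdiag a') -> isometric (qdiag b) (qdiag b') ->
  isometric (qdiag (a ++ b)) (qdiag (a' ++ b')).
Proof.
move=> ia ib; apply: isometric_trans (isometric_sym (qsum_qdiag a b)) _.
exact: isometric_trans (isometric_qsum ia ib) (qsum_qdiag a' b').
Qed.

Lemma witt_diag_isometric a b : isometric (qdiag a) (qdiag b) -> witt_diag a b.
Proof. by move=> iab; exists 0%N, 0%N; rewrite !cats0. Qed.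

Lemma witt_diag_refl a : witt_diag a a.
Proof. exact/witt_diag_isometric/isometric_refl. Qed.

Lemma witt_diag_perm a b : perm_eq a b -> witt_diag a b.
Proof. by move/qdiag_perm/witt_diag_isometric. Qed.

Lemma witt_diag_sym a b : witt_diag a b -> witt_diag b a.
Proof. by case=> r [u i]; exists u, r; exact: isometric_sym. Qed.

Lemma witt_diag_trans a b c : witt_diag a b -> witt_diag b c -> witt_diag a c.
Proof.
case=> r [u i1] [v [w i2]]; exists (r + v)%N, (w + u)%N; rewrite !hyp_seqD !catA.
apply: isometric_trans (isometric_qdiag_cat i1 (isometric_refl _)) _.
apply: isometric_trans (isometric_qdiag_cat i2 (isometric_refl (qdiag (hyp_seq u)))).
by apply: qdiag_perm; perm_by_count.
Qed.

Lemma witt_diag_cat a a' b b' :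
  witt_diag a a' -> witt_diag b b' -> witt_diag (a ++ b) (a' ++ b').
Proof.
case=> r1 [u1 i1] [r2 [u2 i2]]; exists (r1 + r2)%N, (u1 + u2)%N; rewrite !hyp_seqD.
apply: (@isometric_trans _ _ (qdiag ((a ++ hyp_seq r1) ++ (b ++ hyp_seq r2)))).
  by apply: qdiag_perm; perm_by_count.
apply: isometric_trans (isometric_qdiag_cat i1 i2) _.
by apply: qdiag_perm; perm_by_count.
Qed.

Lemma witt_diag_scale_sq x e : e != 0 -> witt_diag [:: x] [:: e ^+ 2 * x].
Proof. by move=> e0; apply/witt_diag_isometric/qdiag_scale_sq. Qed.

Variable ii : k.
Hypothesis ii2 : ii ^+ 2 = -1.
Hypothesis two_neq0 : (2%:R : k) != 0.

Lemma witt_diag_pair x : x != 0 -> witt_diag [:: x; x] [::].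
Proof.
move=> x0; exists 0%N, 1%N.
by have := qdiag_pair_hyp ii2 two_neq0 x0; rewrite /hyp_seq /=.
Qed.

Lemma witt_diag_ones m a : ~~ odd m -> witt_diag (nseq m 1 ++ a) a.
Proof.
move=> /negPf ev; rewrite -[m]odd_double_half ev add0n.
elim: m./2 => [|n IH]; first exact: witt_diag_refl.
exact: (witt_diag_cat (witt_diag_pair (oner_neq0 k)) IH).
Qed.

Lemma witt_diag_square_pair x y : x != 0 -> y != 0 ->
  (exists e, x * y = e ^+ 2) -> witt_diag [:: x; y] [::].
Proof.
move=> x0 y0 [e exy].
have e0 : e != 0.
  by apply: contraNneq (mulf_neq0 x0 y0) => e0; rewrite exy e0 expr0n.
apply: witt_diag_trans (witt_diag_pair x0).
apply: (witt_diag_cat (witt_diag_refl [:: x])).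
have -> : x = (x / e) ^+ 2 * y.
  by rewrite expr_div_n -mulrA mulrCA -exy; field; rewrite y0 x0.
by apply: witt_diag_scale_sq; rewrite mulf_neq0 ?invr_eq0.
Qed.

End WittDiag.

Section PfisterDiag.
Variable k : fieldType.
Implicit Types (a l : seq k) (b x : k).

Definition pfister_seq a : seq k :=
  foldr (fun x acc => [seq u * v | u <- [:: 1; x], v <- acc]) [:: 1] a.

Lemma pfister_qdiag a : isometric (pfister a) (qdiag (pfister_seq a)).
Proof.
elim: a => [|x a IH]; first exact: isometric_refl.
exact: isometric_trans (isometric_qtens (isometric_refl _) IH) (qtens_qdiag _ _).
Qed.

Lemma qbigsum_pfister_qdiag (s : seq (seq k)) :
  isometric (qbigsum (map (@pfister k) s)) (qdiag (flatten (map pfister_seq s))).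
Proof.
elim: s => [|a s IH]; first exact: isometric_refl.
exact: isometric_trans (isometric_qsum (pfister_qdiag a) IH) (qsum_qdiag _ _).
Qed.

Fixpoint pfister_chain b l : seq (seq k) :=
  if l is x :: l' then [:: b; x] :: pfister_chain (b * x) l' else [::].

Lemma size_pfister_chain b l : size (pfister_chain b l) = size l.
Proof. by elim: l b => //= x l IH b; rewrite IH. Qed.

Lemma pfister_chain_nz b l : b != 0 -> all (fun y => y != 0) l ->
  all (fun a => (size a == 2%N) && all (fun y => y != 0) a) (pfister_chain b l).
Proof.
elim: l b => //= x l IH b b0 /andP [x0 l0].
by rewrite b0 x0 /= IH // mulf_neq0.
Qed.

Variable ii : k.
Hypothesis ii2 : ii ^+ 2 = -1.
Hypothesis two_neq0 : (2%:R : k) != 0.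

(* <b, x> ~ <<b, x>> + <1, b x>, because <1, 1> and <b x, b x> are hyperbolic. *)
Lemma witt_diag_pfister_chain b l : b != 0 -> all (fun y => y != 0) l ->
  witt_diag (b :: l) (flatten (map pfister_seq (pfister_chain b l))
                      ++ nseq (size l) 1 ++ [:: b * \prod_(y <- l) y]).
Proof.
elim: l b => [|x l IH] b b0 /=; first by rewrite big_nil mulr1 => _; exact: witt_diag_refl.
case/andP => x0 l0; have bx0 : b * x != 0 by rewrite mulf_neq0.
have step : witt_diag [:: b; x] ([:: 1; x; b; b * x] ++ [:: 1; b * x]).
  apply: witt_diag_sym.
  apply: (@witt_diag_trans _ _ ([:: 1; 1] ++ [:: b * x; b * x] ++ [:: b; x])).
    by apply: witt_diag_perm; perm_by_count.
  exact: witt_diag_cat (witt_diag_pair ii2 two_neq0 (oner_neq0 k))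
           (witt_diag_cat (witt_diag_pair ii2 two_neq0 bx0) (witt_diag_refl _)).
have := witt_diag_cat step (witt_diag_refl l); rewrite -catA /= => s1.
have := witt_diag_cat (witt_diag_refl ([:: 1; x; b; b * x] ++ [:: 1])) (IH _ bx0 l0).
rewrite -catA /= => s2.
apply: witt_diag_trans s1 (witt_diag_trans s2 _).
rewrite big_cons !mulr1 !mul1r [b * (x * _)]mulrA.
by apply: witt_diag_perm; perm_by_count.
Qed.

End PfisterDiag.

Section Invariants.
Variable k : fieldType.
Implicit Types p q : qform k.

Lemma size_hyp_seq r : size (hyp_seq k r) = (2 * r)%N.
Proof. by elim: r => //= r IH; rewrite IH; lia. Qed.

Lemma qdim_qbigsum (l : seq (qform k)) : qdim (qbigsum l) = sumn (map (@qdim k) l).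
Proof. by elim: l => //= p l ->. Qed.

Lemma in_Ipow_even m q : (0 < m)%N -> in_Ipow m q -> ~~ odd (qdim q).
Proof.
case: m => // m _ [r [F [hF [u [v /qdim_isometric]]]]].
rewrite /= qdim_qbigsum !size_hyp_seq -map_comp => /(congr1 odd).
rewrite !oddD /= !addbF !addbb !addbF => ->.
elim: (enum 'I_r) => //= i s IH.
by rewrite oddD (negbTE IH) addbF enum_ordSl /= oddM (negbTE (hF i ord0).2).
Qed.

Definition sq_det p : Prop := exists c, \det (gram p) = c ^+ 2.

Lemma sq_det_isometric p q : isometric p q -> sq_det p -> sq_det q.
Proof.
by move=> /det_isometric [c _ eq] [d ep]; exists (c * d); rewrite eq ep exprMn.
Qed.

Lemma sq_det_qsum p q : sq_det p -> sq_det q -> sq_det (qsum p q).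
Proof. by move=> [c cp] [d dq]; exists (c * d); rewrite det_ublock cp dq exprMn. Qed.

Lemma sq_det_qsum_cancel p q : \det (gram q) != 0 ->
  sq_det (qsum p q) -> sq_det q -> sq_det p.
Proof.
move=> q0 [c /=]; rewrite det_ublock => epq [d dq].
have d0 : d != 0 by apply: contraNneq q0 => d0; rewrite dq d0 expr0n.
by exists (c / d); rewrite expr_div_n -epq dq mulfK // expf_neq0.
Qed.

Lemma sq_det_qbigsum (I : Type) (l : seq I) (F : I -> qform k) :
  (forall i, sq_det (F i)) -> sq_det (qbigsum (map F l)).
Proof.
move=> hF; elim: l => [|i l IH] /=; last exact: sq_det_qsum.
by exists 1; rewrite det_qdiag big_nil expr1n.
Qed.

Lemma sq_det_qtens_qdiag (s t : seq k) : ~~ odd (size s) -> ~~ odd (size t) ->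
  sq_det (qtens (qdiag s) (qdiag t)).
Proof.
move=> /negPf es /negPf et; apply: sq_det_isometric (isometric_sym (qtens_qdiag s t)) _.
rewrite /sq_det det_qdiag big_allpairs_dep /=.
under eq_bigr do rewrite big_split /= big_const_seq count_predT iter_mulr_1.
rewrite big_split /= prodrXl big_const_seq count_predT iter_mulr_1.
rewrite -[size s]odd_double_half -[size t]odd_double_half es et !add0n -!mul2n.
exists ((\prod_(x <- s) x) ^+ (size t)./2 * (\prod_(y <- t) y) ^+ (size s)./2).
by rewrite exprMn -!exprM ![(_ * 2)%N]mulnC.
Qed.

Lemma det_hyp r : \det (gram (hyp k r)) = (-1) ^+ r.
Proof.
rewrite det_qdiag; elim: r => [|r IH]; first by rewrite big_nil.
by rewrite /= !big_cons IH mul1r exprS.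
Qed.

Hypothesis two_neq0 : (2%:R : k) != 0.

Lemma sq_det_qbigtens2 p1 p2 :
  is_qf p1 /\ ~~ odd (qdim p1) -> is_qf p2 /\ ~~ odd (qdim p2) ->
  sq_det (qbigtens [:: p1; p2]).
Proof.
move=> [/(qf_diag two_neq0) [a1 _ i1] e1] [/(qf_diag two_neq0) [a2 _ i2] e2].
move: e1 e2; rewrite (qdim_isometric i1) (qdim_isometric i2) => e1 e2.
have i2' := isometric_trans (isometric_qtens i2 (isometric_refl (qone k))) (qtens_qdiag _ _).
apply: sq_det_isometric (isometric_sym (isometric_qtens i1 i2')) _.
by apply: sq_det_qtens_qdiag; rewrite // size_allpairs muln1.
Qed.

Variable ii : k.
Hypothesis ii2 : ii ^+ 2 = -1.

Lemma sq_det_hyp r : sq_det (hyp k r).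
Proof. by exists (ii ^+ r); rewrite det_hyp -ii2 exprAC. Qed.

Lemma in_Ipow2_sq_det q : in_Ipow 2 q -> sq_det q.
Proof.
case=> r [F [hF [u [v iso]]]].
apply: (sq_det_qsum_cancel (q := hyp k u)) (sq_det_hyp u).
  by rewrite det_hyp signr_eq0.
apply: sq_det_isometric (isometric_sym iso) (sq_det_qsum _ (sq_det_hyp v)).
apply: sq_det_qbigsum => i; rewrite !enum_ordSl enum_ord0 /=.
exact: sq_det_qbigtens2 (hF _ _) (hF _ _).
Qed.

End Invariants.

Section PfisterBounds.
Variable k : fieldType.
Implicit Types (q : qform k) (a l : seq k) (b c x : k).

Lemma witt_equiv_of_diag p q (s t : seq k) :
  isometric p (qdiag s) -> isometric q (qdiag t) -> witt_diag s t -> witt_equiv p q.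
Proof.
move=> ipa iqb [r [u i]]; exists r, u.
apply: isometric_trans (isometric_qsum ipa (isometric_refl (hyp k r))) _.
apply: isometric_trans (qsum_qdiag _ _) (isometric_trans i _).
apply: isometric_trans (isometric_sym (qsum_qdiag _ _)) _.
exact: isometric_qsum (isometric_sym iqb) (isometric_refl _).
Qed.

Lemma Pf_le_of_witt_diag m q a (s : seq (seq k)) :
  all (fun a => (size a == m) && all (fun x => x != 0) a) s ->
  isometric q (qdiag a) -> witt_diag a (flatten (map (@pfister_seq k) s)) ->
  Pf_le m q (size s).
Proof.
move=> s_ok qa was; exists s; split=> //; split=> //.
exact: witt_equiv_of_diag qa (qbigsum_pfister_qdiag s) was.
Qed.

Variable ii : k.
Hypothesis ii2 : ii ^+ 2 = -1.
Hypothesis two_neq0 : (2%:R : k) != 0.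

Lemma witt_diag_ones_parity m n a : odd m = odd n ->
  witt_diag (nseq m 1 ++ a) (nseq n 1 ++ a).
Proof.
move=> mn; have ev : ~~ odd (m + n) by rewrite oddD mn addbb.
apply: witt_diag_trans (witt_diag_sym (witt_diag_ones ii2 two_neq0 _ ev)) _.
apply: (@witt_diag_trans _ _ (nseq n 1 ++ nseq (m + m) 1 ++ a)).
  by apply: witt_diag_perm; perm_by_count.
apply: witt_diag_cat (witt_diag_refl _) (witt_diag_ones ii2 two_neq0 _ _).
by rewrite oddD addbb.
Qed.

(* <x> = <<x>> - <1> in W(k), and an even number of copies of <1> vanishes. *)
Lemma Pf1_le_of_diag m q a : all (fun x => x != 0) a -> ~~ odd (m + size a) ->
  isometric q (qdiag (nseq m 1 ++ a)) -> Pf_le 1 q (size a).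
Proof.
move=> a_nz ev qa; rewrite -(size_map (fun x => [:: x]) a).
apply: Pf_le_of_witt_diag qa _.
  by rewrite all_map; apply/allP => x xa /=; rewrite (allP a_nz x xa).
apply: witt_diag_trans (witt_diag_ones_parity (n := size a) a _) _.
  by move: ev; rewrite oddD; case: (odd m); case: (odd (size a)).
apply: witt_diag_perm; rewrite -map_comp.
elim: a {a_nz ev} => //= x a IH; rewrite !mulr1.
by rewrite perm_cons -cat1s perm_catCA /= perm_cons.
Qed.

Lemma Pf2_le_of_diag m q b l c : sq_det q ->
  b != 0 -> c != 0 -> all (fun x => x != 0) l -> ~~ odd (m + size l) ->
  isometric q (qdiag (nseq m 1 ++ b :: l ++ [:: c])) -> Pf_le 2 q (size l).
Proof.
move=> sq b0 c0 l_nz ev qa; set be := b * \prod_(y <- l) y.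
have be0 : be != 0 by rewrite mulf_neq0 // prodf_seq_neq0.
have be_c : exists e, be * c = e ^+ 2.
  have [e] := sq_det_isometric qa sq.
  rewrite det_qdiag big_cat /= big_nseq iter_mulr_1 expr1n mul1r.
  by rewrite big_cons big_cat /= big_seq1 mulrA => ebc; exists e.
rewrite -(size_pfister_chain b l).
apply: Pf_le_of_witt_diag (pfister_chain_nz b0 l_nz) qa _; set P := flatten _.
have := witt_diag_cat (witt_diag_refl (nseq m 1))
          (witt_diag_cat (witt_diag_pfister_chain ii2 two_neq0 b0 l_nz)
                         (witt_diag_refl [:: c])).
rewrite /= -/P -/be => wq; apply: witt_diag_trans wq _.
apply: (@witt_diag_trans _ _ (nseq (m + size l) 1 ++ [:: be; c] ++ P)).
  by apply: witt_diag_perm; rewrite nseqD; perm_by_count.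
apply: witt_diag_trans (witt_diag_ones ii2 two_neq0 _ ev) _.
exact: witt_diag_cat (witt_diag_square_pair ii2 two_neq0 be0 c0 be_c) (witt_diag_refl P).
Qed.

Lemma Pf2_le_of_even_diag q a : sq_det q -> all (fun x => x != 0) a ->
  ~~ odd (size a) -> isometric q (qdiag a) -> Pf_le 2 q (size a - 2).
Proof.
case: a => [|b a] sq.
  by move=> _ _ qa; apply: (Pf_le_of_witt_diag (s := [::])) qa (witt_diag_refl _).
case/lastP: a => [|l c] //=; rewrite all_rcons size_rcons -cats1 => /and3P[b0 c0 l_nz].
rewrite !negbK => ev; rewrite subSS subn1 /=.
by apply: (Pf2_le_of_diag (m := 0)).
Qed.

Lemma Pf2_le_of_odd_diag q a : sq_det q -> all (fun x => x != 0) a ->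
  odd (size a) -> isometric q (qdiag (1 :: a)) -> Pf_le 2 q (size a - 2).
Proof.
case: a => [|b a] sq //; case/lastP: a => [|l c] /=.
  rewrite andbT => b0 _ qa.
  exact: (Pf2_le_of_diag (m := 0) (l := [::])) sq (oner_neq0 k) b0 isT isT qa.
rewrite all_rcons size_rcons -cats1 => /and3P[b0 c0 l_nz] ev.
rewrite subSS subn1 /=.
by apply: (Pf2_le_of_diag (m := 1)).
Qed.

End PfisterBounds.

Unset Implicit Arguments.

Theorem proposition2p1 (k : fieldType)
  (hchar : (2%:R : k) != 0) (hi : exists i : k, i ^+ 2 = -1)
  (q : qform k) (hq : is_qf q) :
  (in_Ipow 1 q ->
     Pf_le 1 q (qdim q) /\ (represents q 1 -> Pf_le 1 q (qdim q).-1)) /\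
  (in_Ipow 2 q ->
     Pf_le 2 q (qdim q - 2) /\ (represents q 1 -> Pf_le 2 q (qdim q - 3))).
Proof.
have [ii ii2] := hi.
have [a a_nz qa] := qf_diag hchar hq.
have diag_one : represents q 1 ->
    exists2 a', all (fun x => x != 0) a' & isometric q (qdiag (1 :: a')).
  by move=> h1; have := qf_diag_represents hchar hq h1 (oner_neq0 k).
have dim_q : qdim q = size a := qdim_isometric qa.
split=> hI.
  have ev : ~~ odd (size a) by rewrite -dim_q; apply: in_Ipow_even hI.
  split; first by rewrite dim_q; exact: (Pf1_le_of_diag ii2 hchar (m := 0)).
  move=> /diag_one [a' a'_nz qa']; have /= dim_q' := qdim_isometric qa'.
  rewrite dim_q' /=; apply: (Pf1_le_of_diag ii2 hchar (m := 1)) qa' => //.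
  by rewrite add1n -dim_q' dim_q.
have ev : ~~ odd (size a) by rewrite -dim_q; apply: in_Ipow_even hI.
have sq := in_Ipow2_sq_det hchar ii2 hI.
split; first by rewrite dim_q; exact: (Pf2_le_of_even_diag ii2 hchar).
move=> /diag_one [a' a'_nz qa']; have /= dim_q' := qdim_isometric qa'.
rewrite dim_q' subSS; apply: (Pf2_le_of_odd_diag ii2 hchar) qa' => //.
by move: ev; rewrite -dim_q dim_q' /= negbK.
Qed.
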